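(* Let $p$ be an odd prime and $\mathbb O$ Zorn's split octonion algebra over $\mathbb Q_p$. For integers $a_1,\dots,a_8$ let $\Lambda$ be the set of all $\begin{pmatrix}x&(y_1,y_2,y_3)\\ (z_1,z_2,z_3)&w\end{pmatrix}\in\mathbb O$ with $x\in p^{a_1}\mathbb Z_p$, $y_1\in p^{a_2}\mathbb Z_p$, $y_2\in p^{a_3}\mathbb Z_p$, $y_3\in p^{a_4}\mathbb Z_p$, $z_1\in p^{a_5}\mathbb Z_p$, $z_2\in p^{a_6}\mathbb Z_p$, $z_3\in p^{a_7}\mathbb Z_p$, $w\in p^{a_8}\mathbb Z_p$. Then $\Lambda$ is an order in $\mathbb O$ if and only if all of the following hold: $a_1=a_8=0$; $a_2+a_5\ge0$, $a_3+a_6\ge0$, $a_4+a_7\ge0$; $a_2+a_3\ge a_7$, $a_2+a_4\ge a_6$, $a_3+a_4\ge a_5$, $a_5+a_6\ge a_4$, $a_5+a_7\ge a_3$, $a_6+a_7\ge a_2$.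
   Context: Zorn's split octonion algebra $\mathbb O$ over a field $k$ is the set of formal matrices $\begin{pmatrix}a&\vec v\\ \vec w&d\end{pmatrix}$ with $a,d\in k$, $\vec v,\vec w\in k^3$, with entrywise addition and multiplication $\begin{pmatrix}a&\vec v\\ \vec w&d\end{pmatrix}\begin{pmatrix}\alpha&\vec\phi\\ \vec\psi&\delta\end{pmatrix}=\begin{pmatrix}a\alpha+\vec v\cdot\vec\psi & a\vec\phi+\delta\vec v-\vec w\times\vec\psi\\ \alpha\vec w+d\vec\psi+\vec v\times\vec\phi & d\delta+\vec w\cdot\vec\phi\end{pmatrix}$ (standard dot and cross products), identity $\mathbf 1=\begin{pmatrix}1&0\\0&1\end{pmatrix}$. A lattice in $\mathbb O$ is a finitely generated $\mathbb Z_p$-submodule $\Lambda$ with $\Lambda\otimes\mathbb Q_p=\mathbb O$. An order is a lattice which is a unital subring (contains $\mathbf 1$ and is closed under multiplication). *)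

From HB Require Import structures.
From mathcomp Require Import all_boot all_order all_algebra.
From Stdlib Require List.
Set Implicit Arguments. Unset Strict Implicit. Unset Printing Implicit Defensive.
Import Order.TTheory GRing.Theory Num.Theory.
Local Open Scope ring_scope.

(* We characterise it up to
   isomorphism: a field K with a discrete valuation v (values on nonzero
   elements; v 0 is irrelevant) such that v p = 1, the residue field is F_p
   (every integral element is congruent mod p to one of 0..p-1), and K is
   complete for v.  Such a K is (isomorphic to) Q_p. *)
Definition is_Qp (p : nat) (K : fieldType) (v : K -> int) : Prop :=
  [/\ (forall x y : K, x != 0 -> y != 0 -> v (x * y) = v x + v y),
      (forall x y : K, x != 0 -> y != 0 -> x + y != 0 ->
          Num.min (v x) (v y) <= v (x + y)),
      (p%:R : K) != 0 /\ v (p%:R) = 1,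
      (forall x : K, x != 0 -> 0 <= v x ->
          exists2 n : nat, (n < p)%N & (x - n%:R = 0 \/ 1 <= v (x - n%:R)))
    & (forall u : nat -> K,
          (forall M : int, exists N : nat, forall m n : nat, (N <= m)%N -> (N <= n)%N ->
               u m - u n = 0 \/ M <= v (u m - u n)) ->
          exists l : K, forall M : int, exists N : nat, forall n : nat, (N <= n)%N ->
               u n - l = 0 \/ M <= v (u n - l))].

Definition in_pZp (K : fieldType) (v : K -> int) (a : int) (x : K) : Prop :=
  x = 0 \/ a <= v x.
Definition in_Zp (K : fieldType) (v : K -> int) (x : K) : Prop := in_pZp v 0 x.

Record vec3 (R : Type) := V3 { c1 : R; c2 : R; c3 : R }.

Section Oct.
Variable R : nzRingType.

Definition vdot (a b : vec3 R) : R := c1 a * c1 b + c2 a * c2 b + c3 a * c3 b.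
Definition vcross (a b : vec3 R) : vec3 R :=
  V3 (c2 a * c3 b - c3 a * c2 b) (c3 a * c1 b - c1 a * c3 b) (c1 a * c2 b - c2 a * c1 b).
Definition vadd (a b : vec3 R) : vec3 R := V3 (c1 a + c1 b) (c2 a + c2 b) (c3 a + c3 b).
Definition vopp (a : vec3 R) : vec3 R := V3 (- c1 a) (- c2 a) (- c3 a).
Definition vscale (k : R) (a : vec3 R) : vec3 R := V3 (k * c1 a) (k * c2 a) (k * c3 a).
Definition vzero : vec3 R := V3 0 0 0.

(* the formal matrix ( a  v ; w  d ) *)
Record oct := Oct { oa : R; ov : vec3 R; ow : vec3 R; od : R }.

Definition omul (x y : oct) : oct :=
  Oct (oa x * oa y + vdot (ov x) (ow y))
      (vadd (vadd (vscale (oa x) (ov y)) (vscale (od y) (ov x)))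
            (vopp (vcross (ow x) (ow y))))
      (vadd (vadd (vscale (oa y) (ow x)) (vscale (od x) (ow y)))
            (vcross (ov x) (ov y)))
      (od x * od y + vdot (ow x) (ov y)).

Definition oone : oct := Oct 1 vzero vzero 1.
Definition ozero : oct := Oct 0 vzero vzero 0.
Definition oadd (x y : oct) : oct :=
  Oct (oa x + oa y) (vadd (ov x) (ov y)) (vadd (ow x) (ow y)) (od x + od y).
Definition oscale (k : R) (x : oct) : oct :=
  Oct (k * oa x) (vscale k (ov x)) (vscale k (ow x)) (k * od x).
Definition osub (x y : oct) : oct := oadd x (oscale (-1) y).

Fixpoint in_span (C : R -> Prop) (s : seq oct) (x : oct) : Prop :=
  match s with
  | [::] => x = ozero
  | g :: s' => exists2 c : R, C c & in_span C s' (osub x (oscale c g))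
  end.
End Oct.

Arguments oone {R}.
Arguments ozero {R}.

(* Lattice in O over Q_p: a finitely generated Z_p-submodule L with L (x) Q_p = O,
   i.e. L = Z_p-span of a finite list, and the Q_p-span of L is all of O. *)
Definition is_lattice (K : fieldType) (v : K -> int) (L : oct K -> Prop) : Prop :=
  (exists s : seq (oct K), forall x, L x <-> in_span (in_Zp v) s x) /\
  (exists2 s : seq (oct K), (forall g, List.In g s -> L g) & forall x, in_span (fun _ => True) s x).

Definition is_order (K : fieldType) (v : K -> int) (L : oct K -> Prop) : Prop :=
  [/\ is_lattice v L, L oone & forall x y, L x -> L y -> L (omul x y)].

Definition box (K : fieldType) (v : K -> int) (a1 a2 a3 a4 a5 a6 a7 a8 : int)
  (x : oct K) : Prop :=
  [/\ in_pZp v a1 (oa x), in_pZp v a2 (c1 (ov x)), in_pZp v a3 (c2 (ov x)),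
      in_pZp v a4 (c3 (ov x))
    & [/\ in_pZp v a5 (c1 (ow x)), in_pZp v a6 (c2 (ow x)),
      in_pZp v a7 (c3 (ow x)) & in_pZp v a8 (od x)]].

From HB Require Import structures.
From mathcomp Require Import all_boot all_order all_algebra.
From mathcomp Require Import ring zify.
Set Implicit Arguments. Unset Strict Implicit. Unset Printing Implicit Defensive.
Import Order.TTheory GRing.Theory Num.Theory.
Local Open Scope ring_scope.

(* Of the axioms of Q_p only v(xy) = v x + v y, the ultrametric inequality
   and v p = 1 are used.

   Every box Lambda(a1..a8) is a lattice: it is the Z_p-span of the eight
   scaled coordinate vectors p^(a_i) e_i, which also span O over Q_p.
   Necessity: 1 in Lambda gives a1, a8 <= 0 and squaring p^a1 e_1 and
   p^a8 e_8 gives a1, a8 >= 0; each of the nine inequalities is read off a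
   single product of two scaled basis vectors, which is +-p^b p^c in one
   coordinate.  Sufficiency: every coordinate of a product x y is a signed
   sum of products of a coordinate of x and one of y, each of which lies in
   the required ideal by one of the inequalities. *)

Lemma oct_eq0 (R : nzRingType) (x : oct R) :
  oa x = 0 -> c1 (ov x) = 0 -> c2 (ov x) = 0 -> c3 (ov x) = 0 ->
  c1 (ow x) = 0 -> c2 (ow x) = 0 -> c3 (ow x) = 0 -> od x = 0 -> x = ozero.
Proof. by case: x => a [? ? ?] [? ? ?] d /= -> -> -> -> -> -> -> ->. Qed.

Section Valuation.
Variables (K : fieldType) (v : K -> int).
Hypothesis v_mul : forall x y : K, x != 0 -> y != 0 -> v (x * y) = v x + v y.
Hypothesis v_add : forall x y : K, x != 0 -> y != 0 -> x + y != 0 ->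
  Num.min (v x) (v y) <= v (x + y).

Local Notation P := (in_pZp v).

Lemma v1 : v 1 = 0.
Proof. by have := @v_mul (1 : K) 1 (oner_neq0 K) (oner_neq0 K); rewrite mulr1; lia. Qed.

(* v is invariant under sign change, since (-1)^2 = 1 forces v (-1) = 0. *)
Lemma vN x : x != 0 -> v (- x) = v x.
Proof.
move=> x_neq0; have m1_neq0 : (-1 : K) != 0 by rewrite oppr_eq0 oner_neq0.
have vm1 : v (-1) = 0.
  by have := @v_mul (-1 : K) (-1) m1_neq0 m1_neq0; rewrite mulrNN mulr1 v1; lia.
by rewrite -mulN1r v_mul // vm1 add0r.
Qed.

Lemma vV x : x != 0 -> v x^-1 = - v x.
Proof. by move=> x_neq0; have := v_mul x_neq0 (invr_neq0 x_neq0); rewrite mulfV // v1; lia. Qed.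

Lemma P0 a : P a 0. Proof. by left. Qed.

Lemma P_opp a x : P a x -> P a (- x).
Proof.
have [->|x_neq0] := eqVneq x 0; first by rewrite oppr0.
by case=> [x0|h]; [move: x_neq0; rewrite x0 eqxx | right; rewrite vN].
Qed.

Lemma P_add a x y : P a x -> P a y -> P a (x + y).
Proof.
have [->|x_neq0] := eqVneq x 0; first by rewrite add0r.
have [->|y_neq0] := eqVneq y 0; first by rewrite addr0.
have [->|s_neq0] := eqVneq (x + y) 0; first by left.
move=> [x0|hx]; first by move: x_neq0; rewrite x0 eqxx.
move=> [y0|hy]; first by move: y_neq0; rewrite y0 eqxx.
by right; have := v_add x_neq0 y_neq0 s_neq0; rewrite /Num.min; case: ifP => _; lia.
Qed.

Lemma P_mul a b c x y : P b x -> P c y -> a <= b + c -> P a (x * y).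
Proof.
have [->|x_neq0] := eqVneq x 0; first by rewrite mul0r => *; left.
have [->|y_neq0] := eqVneq y 0; first by rewrite mulr0 => *; left.
move=> [x0|hx]; first by move: x_neq0; rewrite x0 eqxx.
move=> [y0|hy]; first by move: y_neq0; rewrite y0 eqxx.
by move=> le_abc; right; rewrite v_mul //; lia.
Qed.

Lemma P_one_le a : P a 1 -> a <= 0.
Proof. by case=> [/eqP|]; rewrite ?oner_eq0 ?v1. Qed.

Section PowersOfP.
Variable p : nat.
Hypothesis p_neq0 : (p%:R : K) != 0.
Hypothesis v_p : v (p%:R) = 1.

Definition pz (a : int) : K := (p%:R : K) ^ a.

Lemma pz_neq0 a : pz a != 0.
Proof. by rewrite /pz expfz_neq0. Qed.

Lemma vpz a : v (pz a) = a.
Proof.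
have vpn (n : nat) : v (p%:R ^+ n) = n%:Z.
  elim: n => [|n IH]; first by rewrite expr0 v1.
  by rewrite exprS v_mul ?expf_neq0 // v_p IH; lia.
rewrite /pz; case: a => n /=; first exact: vpn.
by rewrite vV ?expf_neq0 // vpn NegzE; lia.
Qed.

Lemma P_pz a : P a (pz a). Proof. by right; rewrite vpz. Qed.

Lemma P_monomial_le a b c x :
  P a x -> x = pz b * pz c \/ x = - (pz b * pz c) -> a <= b + c.
Proof.
have m_neq0 : pz b * pz c != 0 by rewrite mulf_neq0 ?pz_neq0.
have vm : v (pz b * pz c) = b + c by rewrite v_mul ?pz_neq0 // !vpz.
move=> [-> | le_av] [E|E].
- by move: m_neq0; rewrite -E eqxx.
- by move: m_neq0; rewrite -oppr_eq0 -E eqxx.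
- by rewrite -vm -E.
- by rewrite -vm -(vN m_neq0) -E.
Qed.

Lemma P_div a x : P a x -> in_Zp v (x / pz a).
Proof.
have [->|x_neq0] := eqVneq x 0; first by rewrite mul0r; left.
move=> [x0|h]; first by move: x_neq0; rewrite x0 eqxx.
by right; rewrite v_mul ?invr_neq0 ?pz_neq0 // vV ?pz_neq0 // vpz; lia.
Qed.

Lemma P_scale a c : in_Zp v c -> P a (c * pz a).
Proof. by move=> h; apply: (P_mul h (P_pz a)); lia. Qed.

Definition box_basis (a1 a2 a3 a4 a5 a6 a7 a8 : int) : seq (oct K) :=
  [:: Oct (pz a1) (vzero K) (vzero K) 0; Oct 0 (V3 (pz a2) 0 0) (vzero K) 0;
      Oct 0 (V3 0 (pz a3) 0) (vzero K) 0; Oct 0 (V3 0 0 (pz a4)) (vzero K) 0;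
      Oct 0 (vzero K) (V3 (pz a5) 0 0) 0; Oct 0 (vzero K) (V3 0 (pz a6) 0) 0;
      Oct 0 (vzero K) (V3 0 0 (pz a7)) 0; Oct 0 (vzero K) (vzero K) (pz a8)].

Section Box.
Variables a1 a2 a3 a4 a5 a6 a7 a8 : int.

Local Notation Box := (box v a1 a2 a3 a4 a5 a6 a7 a8).
Local Notation basis := (box_basis a1 a2 a3 a4 a5 a6 a7 a8).

Lemma in_span_basis (C : K -> Prop) (x : oct K) :
  C (oa x / pz a1) -> C (c1 (ov x) / pz a2) -> C (c2 (ov x) / pz a3) ->
  C (c3 (ov x) / pz a4) -> C (c1 (ow x) / pz a5) -> C (c2 (ow x) / pz a6) ->
  C (c3 (ow x) / pz a7) -> C (od x / pz a8) -> in_span C basis x.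
Proof.
case: x => xa [y1 y2 y3] [z1 z2 z3] xd /= h1 h2 h3 h4 h5 h6 h7 h8.
exists (xa / pz a1) => //; exists (y1 / pz a2) => //; exists (y2 / pz a3) => //.
exists (y3 / pz a4) => //; exists (z1 / pz a5) => //; exists (z2 / pz a6) => //.
exists (z3 / pz a7) => //; exists (xd / pz a8) => //.
by apply: oct_eq0 => /=; rewrite !divfK ?pz_neq0 //; ring.
Qed.

(* If x - c p^a vanishes with c in Z_p then x is in p^a Z_p; the vanishing
   expression e is whatever a coordinate of a basis expansion reduces to. *)
Lemma P_coord a c x e : in_Zp v c -> e = 0 -> x - c * pz a = e -> P a x.
Proof. by move=> hc -> /eqP; rewrite subr_eq0 => /eqP ->; exact: P_scale. Qed.

Lemma box_of_span x : in_span (in_Zp v) basis x -> Box x.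
Proof.
case: x => xa [y1 y2 y3] [z1 z2 z3] xd.
move=> [k1 hk1 [k2 hk2 [k3 hk3 [k4 hk4 [k5 hk5 [k6 hk6 [k7 hk7 [k8 hk8 E]]]]]]]].
have := congr1 (@oa K) E; have := congr1 (fun o => c1 (@ov K o)) E.
have := congr1 (fun o => c2 (@ov K o)) E; have := congr1 (fun o => c3 (@ov K o)) E.
have := congr1 (fun o => c1 (@ow K o)) E; have := congr1 (fun o => c2 (@ow K o)) E.
have := congr1 (fun o => c3 (@ow K o)) E; have := congr1 (@od K) E.
move=> /= Ed Ez3 Ez2 Ez1 Ey3 Ey2 Ey1 Ea; split=> /=; last split=> /=.
- by apply: (P_coord hk1 Ea); ring.
- by apply: (P_coord hk2 Ey1); ring.
- by apply: (P_coord hk3 Ey2); ring.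
- by apply: (P_coord hk4 Ey3); ring.
- by apply: (P_coord hk5 Ez1); ring.
- by apply: (P_coord hk6 Ez2); ring.
- by apply: (P_coord hk7 Ez3); ring.
- by apply: (P_coord hk8 Ed); ring.
Qed.

Lemma box_basis_sub g : List.In g basis -> Box g.
Proof.
by rewrite /=; do 8 (case=> [<-|]; first by split; last split; (apply: P0 || apply: P_pz)).
Qed.

Lemma box_is_lattice : is_lattice v Box.
Proof.
split; exists basis.
- move=> x; split; last exact: box_of_span.
  by case=> ? ? ? ? [? ? ? ?]; apply: in_span_basis; exact: P_div.
- exact: box_basis_sub.
- by move=> x; apply: in_span_basis.
Qed.

Local Ltac expand := rewrite /omul /vdot /vcross /vadd /vscale /vopp /=; ring.

Local Ltac basis_member := apply: box_basis_sub; rewrite /box_basis /=; intuition.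

Lemma box_order_diagonal : is_order v Box -> a1 = 0 /\ a8 = 0.
Proof.
case=> _ [le_a1 _ _ _ [_ _ _ le_a8]] closed.
have {le_a1 le_a8} [le_a1 le_a8] := (P_one_le le_a1, P_one_le le_a8).
have b1 : Box (Oct (pz a1) (vzero K) (vzero K) 0) by basis_member.
have b8 : Box (Oct 0 (vzero K) (vzero K) (pz a8)) by basis_member.
have ge_a1 : a1 <= a1 + a1.
  by case: (closed _ _ b1 b1) => h _ _ _ _; apply: (P_monomial_le h); left; expand.
have ge_a8 : a8 <= a8 + a8.
  by case: (closed _ _ b8 b8) => _ _ _ _ [_ _ _ h]; apply: (P_monomial_le h); left; expand.
by split; lia.
Qed.

Lemma box_closed_bounds :
  (forall x y, Box x -> Box y -> Box (omul x y)) ->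
  [/\ [/\ a1 <= a2 + a5, a1 <= a3 + a6 & a1 <= a4 + a7],
      [/\ a7 <= a2 + a3, a6 <= a2 + a4 & a5 <= a3 + a4]
    & [/\ a4 <= a5 + a6, a3 <= a5 + a7 & a2 <= a6 + a7]].
Proof.
move=> closed.
have b2 : Box (Oct 0 (V3 (pz a2) 0 0) (vzero K) 0) by basis_member.
have b3 : Box (Oct 0 (V3 0 (pz a3) 0) (vzero K) 0) by basis_member.
have b4 : Box (Oct 0 (V3 0 0 (pz a4)) (vzero K) 0) by basis_member.
have b5 : Box (Oct 0 (vzero K) (V3 (pz a5) 0 0) 0) by basis_member.
have b6 : Box (Oct 0 (vzero K) (V3 0 (pz a6) 0) 0) by basis_member.
have b7 : Box (Oct 0 (vzero K) (V3 0 0 (pz a7)) 0) by basis_member.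
split; split.
- by case: (closed _ _ b2 b5) => h _ _ _ _; apply: (P_monomial_le h); left; expand.
- by case: (closed _ _ b3 b6) => h _ _ _ _; apply: (P_monomial_le h); left; expand.
- by case: (closed _ _ b4 b7) => h _ _ _ _; apply: (P_monomial_le h); left; expand.
- by case: (closed _ _ b2 b3) => _ _ _ _ [_ _ h _]; apply: (P_monomial_le h); left; expand.
- by case: (closed _ _ b2 b4) => _ _ _ _ [_ h _ _]; apply: (P_monomial_le h); right; expand.
- by case: (closed _ _ b3 b4) => _ _ _ _ [h _ _ _]; apply: (P_monomial_le h); left; expand.
- by case: (closed _ _ b5 b6) => _ _ _ h _; apply: (P_monomial_le h); right; expand.
- by case: (closed _ _ b5 b7) => _ _ h _ _; apply: (P_monomial_le h); left; expand.
- by case: (closed _ _ b6 b7) => _ h _ _ _; apply: (P_monomial_le h); right; expand.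
Qed.

End Box.
End PowersOfP.

Lemma box_one a2 a3 a4 a5 a6 a7 : box v 0 a2 a3 a4 a5 a6 a7 0 oone.
Proof. by split; last split; (apply: P0 || by right; rewrite v1). Qed.

Lemma box_mul_closed a2 a3 a4 a5 a6 a7 x y :
  [/\ 0 <= a2 + a5, 0 <= a3 + a6 & 0 <= a4 + a7] ->
  [/\ [/\ a7 <= a2 + a3, a6 <= a2 + a4 & a5 <= a3 + a4]
    & [/\ a4 <= a5 + a6, a3 <= a5 + a7 & a2 <= a6 + a7]] ->
  box v 0 a2 a3 a4 a5 a6 a7 0 x -> box v 0 a2 a3 a4 a5 a6 a7 0 y ->
  box v 0 a2 a3 a4 a5 a6 a7 0 (omul x y).
Proof.
move=> [? ? ?] [[? ? ?] [? ? ?]].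
case: x => xa [y1 y2 y3] [z1 z2 z3] xd; case: y => xa' [y1' y2' y3'] [z1' z2' z3'] xd'.
rewrite /box /omul /vdot /vcross /vadd /vscale /vopp /=.
move=> [? ? ? ? [? ? ? ?]] [? ? ? ? [? ? ? ?]].
split; last split; repeat first
  [ apply: P_add | apply: P_opp | apply: P_mul; [eassumption | eassumption | lia] ].
Qed.

End Valuation.

Theorem mainTheorem11 (p : nat) (K : fieldType) (v : K -> int)
  (hp : prime p) (hodd : odd p) (hK : is_Qp p v)
  (a1 a2 a3 a4 a5 a6 a7 a8 : int) :
  is_order v (box v a1 a2 a3 a4 a5 a6 a7 a8) <->
  [/\ a1 = 0, a8 = 0,
      [/\ 0 <= a2 + a5, 0 <= a3 + a6 & 0 <= a4 + a7]
    & [/\ [/\ a7 <= a2 + a3, a6 <= a2 + a4 & a5 <= a3 + a4]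
         & [/\ a4 <= a5 + a6, a3 <= a5 + a7 & a2 <= a6 + a7]]].
Proof.
case: hK => v_mul v_add [p_neq0 v_p] _ _; split.
  move=> order; have [a1_0 a8_0] := box_order_diagonal v_mul p_neq0 v_p order.
  case: order => _ _ /(box_closed_bounds v_mul p_neq0 v_p).
  by rewrite a1_0 => -[[? ? ?] ? ?]; split.
case=> -> -> products_nonneg triangle; split.
- exact: (box_is_lattice v_mul p_neq0 v_p).
- exact: (box_one v_mul).
- by move=> x y; apply: (box_mul_closed v_mul v_add).
Qed.
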